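(* Let $G$ be a topological group and $A$ a topological $G$-module. Suppose that for every $p\ge 0$ the augmented column complex $0\to A_c^p(G,A)\xrightarrow{\epsilon}A_{lc}^{p,0}(G,A)\xrightarrow{d_v}A_{lc}^{p,1}(G,A)\xrightarrow{d_v}\cdots$ is exact. Then for every $p\ge 0$ the augmented sub column complex of equivariant cochains $0\to C_c^p(G,A)\xrightarrow{\epsilon}A_{lc}^{p,0}(G,A)^G\xrightarrow{d_v}A_{lc}^{p,1}(G,A)^G\xrightarrow{d_v}\cdots$ is exact as well.
   Context: A topological $G$-module is an abelian topological group $A$ with an action of $G$ by group automorphisms such that the action map $G\times A\to A$ is continuous. For an identity neighbourhood $U$ of $G$ put $\Gamma_U^0:=G$ and, for $q\ge 1$, $\Gamma_U^q:=\{(g_0,\dots,g_q)\in G^{q+1}\mid g_i^{-1}g_j\in U \text{ for all } i,j\}$. $A_c^p(G,A):=C(G^{p+1},A)$ is the group of continuous maps, and $C_c^p(G,A)$ is its subgroup of $G$-equivariant maps, where $G$ acts by $(g.f)(g_0,\dots,g_p)=g.f(g^{-1}g_0,\dots,g^{-1}g_p)$. $A_{lc}^{p,q}(G,A)$ is the group of maps $f\colon G^{p+1}\times G^{q+1}\to A$ whose restriction to $G^{p+1}\times\Gamma_U^q$ is continuous for some identity neighbourhood $U$; $d_v f(\vec x,y_0,\dots,y_{q+1})=(-1)^p\sum_{i=0}^{q+1}(-1)^i f(\vec x,y_0,\dots,\widehat{y_i},\dots,y_{q+1})$. $G$ acts on $A_{lc}^{p,q}(G,A)$ by $(g.f)(\vec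 x,\vec y)=g.f(g^{-1}\vec x,g^{-1}\vec y)$ and $A_{lc}^{p,q}(G,A)^G$ denotes the fixed points. The augmentation is $\epsilon(f)(\vec x,y_0)=f(\vec x)$. *)

From HB Require Import structures.
From mathcomp Require Import all_boot all_order all_algebra.
From mathcomp Require Import all_classical all_reals all_analysis.
Set Implicit Arguments.
Unset Strict Implicit.
Unset Printing Implicit Defensive.
Import Order.TTheory GRing.Theory Num.Theory.
Local Open Scope classical_set_scope.
Local Open Scope ring_scope.

Record topGroup (G : topologicalType) := TopGroup {
  tg_mul : G -> G -> G;
  tg_inv : G -> G;
  tg_one : G;
  tg_mulA : forall x y z, tg_mul x (tg_mul y z) = tg_mul (tg_mul x y) z;
  tg_mul1g : forall x, tg_mul tg_one x = x;
  tg_mulg1 : forall x, tg_mul x tg_one = x;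
  tg_mulVg : forall x, tg_mul (tg_inv x) x = tg_one;
  tg_mulgV : forall x, tg_mul x (tg_inv x) = tg_one;
  tg_mul_cont : continuous (fun xy : G * G => tg_mul xy.1 xy.2);
  tg_inv_cont : continuous tg_inv
}.

Definition is_topGmodule (G : topologicalType) (tg : topGroup G)
    (A : topologicalZmodType) (act : G -> A -> A) : Prop :=
  [/\ forall g, zmod_morphism (act g),
      forall a, act (tg_one tg) a = a,
      forall g h a, act (tg_mul tg g h) a = act g (act h a)
    & continuous (fun ga : G * A => act ga.1 ga.2)].

Unset Implicit Arguments.
Section Cochains.
Variables (G : topologicalType) (tg : topGroup G) (A : topologicalZmodType)
  (act : G -> A -> A).

Local Notation "x * y" := (tg_mul tg x y).
Local Notation "x ^-1" := (tg_inv tg x).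

Definition Gpow (n : nat) := {ptws 'I_n -> G}.

Definition ltrans (n : nat) (g : G) (x : Gpow n) : Gpow n :=
  fun i => g^-1 * x i.

Definition Gamma (U : set G) (q : nat) : set (Gpow q.+1) :=
  if q is 0 then setT
  else [set y | forall i j : 'I_q.+1, U ((y i)^-1 * y j)].

Definition Ac (p : nat) : set (Gpow p.+1 -> A) :=
  [set f | continuous f].

Definition Cc (p : nat) : set (Gpow p.+1 -> A) :=
  [set f | Ac p f /\ forall g x, act g (f (ltrans _ g x)) = f x].

Definition Alc (p q : nat) : set (Gpow p.+1 * Gpow q.+1 -> A) :=
  [set f | exists U : set G, nbhs (tg_one tg) U /\
      {within [set x : Gpow p.+1 * Gpow q.+1 | Gamma U q x.2], continuous f}].

Definition AlcG (p q : nat) : set (Gpow p.+1 * Gpow q.+1 -> A) :=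
  [set f | Alc p q f /\
     forall g x, act g (f (ltrans _ g x.1, ltrans _ g x.2)) = f x].

Definition eps (p : nat) (f : Gpow p.+1 -> A) : Gpow p.+1 * Gpow 1 -> A :=
  fun x => f x.1.

Definition dv (p q : nat) (f : Gpow p.+1 * Gpow q.+1 -> A) :
    Gpow p.+1 * Gpow q.+2 -> A :=
  fun x => (\sum_(i < q.+2)
              f (x.1, (fun j : 'I_q.+1 => x.2 (lift i j)) : Gpow q.+1)
                *~ ((-1) ^+ i)) *~ ((-1) ^+ p).

Definition aug_exact (p : nat) (C0 : set (Gpow p.+1 -> A))
    (C : forall q, set (Gpow p.+1 * Gpow q.+1 -> A)) : Prop :=
  [/\ forall f, C0 f -> eps p f = 0 -> f = 0,
      [set h | C 0 h /\ dv p 0 h = 0] = eps p @` C0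
    & forall q, [set h | C q.+1 h /\ dv p q.+1 h = 0]
                = dv p q @` C q].

End Cochains.

Arguments Gpow : clear implicits.
Arguments ltrans {G} tg {n} g x.
Arguments Gamma {G} tg U q.
Arguments Ac {G} A p.
Arguments Cc {G} tg {A} act p.
Arguments Alc {G} tg A p q.
Arguments AlcG {G} tg {A} act p q.
Arguments eps {G A} p f.
Arguments dv {G A} p q f.
Arguments aug_exact {G A} p C0 C.

(* Every A_lc cochain f is made G-fixed by
     equivariantize f (x, y) := x_0 . f (x_0^-1 x, x_0^-1 y),
   where x_0 is the first entry of x.  This operation preserves local
   continuity (on Gamma_U^q, which is stable under left translation), commutes
   with d_v (d_v only deletes entries of y, and x_0 acts additively), and fixes
   cochains that are already G-fixed.  It is therefore a retraction of the
   column complex onto its subcomplex of fixed points, and a retract of an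
   exact augmented complex is exact; on the augmentation, eps f is fixed
   exactly when f is equivariant. *)

From HB Require Import structures.
From mathcomp Require Import all_boot all_order all_algebra.
From mathcomp Require Import all_classical all_reals all_analysis.
Import GRing.Theory.
Local Open Scope classical_set_scope.
Local Open Scope ring_scope.

Lemma aug_exact_retract (G : topologicalType) (A : topologicalZmodType) (p : nat)
    (C0 D0 : set (Gpow G p.+1 -> A))
    (C D P : forall q, set (Gpow G p.+1 * Gpow G q.+1 -> A))
    (r : forall q, (Gpow G p.+1 * Gpow G q.+1 -> A) -> Gpow G p.+1 * Gpow G q.+1 -> A) :
  aug_exact p C0 C ->
  (forall f, D0 f <-> C0 f /\ P 0 (eps p f)) ->
  (forall q f, D q f <-> C q f /\ P q f) ->
  (forall q f, P q f -> P q.+1 (dv p q f)) ->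
  (forall q f, C q f -> D q (r q f)) ->
  (forall q f, P q f -> r q f = f) ->
  (forall q f, dv p q (r q f) = r q.+1 (dv p q f)) ->
  aug_exact p D0 D.
Proof.
move=> [Cinj Ceps Cdv] D0E DE Pdv rD rP dv_r; split.
- by move=> f /D0E[C0f _]; exact: Cinj.
- apply/seteqP; split=> [h [/DE[Ch Ph] dvh]|_ [f /D0E[C0f Pf] <-]].
    have : [set h | C 0 h /\ dv p 0 h = 0] h by [].
    by rewrite Ceps => -[f C0f fh]; exists f => //; apply/D0E; rewrite fh.
  have : (eps p @` C0) (eps p f) by exists f.
  by rewrite -Ceps => -[Cf dvf]; split=> //; exact/DE.
- move=> q; apply/seteqP; split=> [h [/DE[Ch Ph] dvh]|_ [f /DE[Cf Pf] <-]].
    have : [set h | C q.+1 h /\ dv p q.+1 h = 0] h by [].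
    rewrite Cdv => -[f Cf fh]; exists (r q f); first exact: rD.
    by rewrite dv_r fh rP.
  have : (dv p q @` C q) (dv p q f) by exists f.
  by rewrite -Cdv => -[Cdvf dvdvf]; split=> //; apply/DE; split=> //; exact: Pdv.
Qed.

Lemma dv_zmod_morphism (G : topologicalType) (A B : topologicalZmodType)
    (phi : A -> B) p q (f : Gpow G p.+1 * Gpow G q.+1 -> A) x :
  zmod_morphism phi -> phi (dv p q f x) = dv p q (phi \o f) x.
Proof.
move=> phiD.
pose Phi : {additive A -> B} := HB.pack phi (GRing.isZmodMorphism.Build _ _ phi phiD).
rewrite /dv -[phi]/(Phi : A -> B) raddfMz raddf_sum; congr (_ *~ _).
by apply: eq_bigr => i _; rewrite raddfMz.
Qed.

Lemma within_continuous_comp {X Y Z : topologicalType} {S : set X} {S' : set Y}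
    {t : X -> Y} {f : Y -> Z} :
  continuous t -> (forall x, S x -> S' (t x)) -> {within S', continuous f} ->
  {within S, continuous (f \o t)}.
Proof.
move=> tC tS /subspace_continuousP fC.
apply/(@subspace_continuousP _ S) => x Sx.
have tSS' : t @ within S (nbhs x) --> within S' (nbhs (t x)).
  move=> P /= S'P; have := tC x _ S'P; rewrite nbhs_simpl /= => tP.
  by apply: filterS tP => z Pz Sz; exact/Pz/tS.
exact: cvg_trans (cvg_app f tSS') (fC _ (tS _ Sx)).
Qed.

Section GModuleCochains.
Variables (G : topologicalType) (tg : topGroup G) (A : topologicalZmodType)
  (act : G -> A -> A).
Local Notation "x * y" := (tg_mul tg x y).
Local Notation "x ^-1" := (tg_inv tg x).
Local Notation Cochain p q := (Gpow G p.+1 * Gpow G q.+1 -> A).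

Lemma tg_mulKg g x : g^-1 * (g * x) = x.
Proof. by rewrite tg_mulA tg_mulVg tg_mul1g. Qed.

Lemma tg_mulKVg g x : g * (g^-1 * x) = x.
Proof. by rewrite tg_mulA tg_mulgV tg_mul1g. Qed.

Lemma tg_invMg g h : (g * h)^-1 = h^-1 * g^-1.
Proof.
have ghV : (g * h) * (h^-1 * g^-1) = tg_one tg.
  by rewrite -tg_mulA tg_mulKVg tg_mulgV.
by rewrite -[LHS](tg_mulg1 tg) -ghV tg_mulKg.
Qed.

Lemma tg_invgK g : (g^-1)^-1 = g.
Proof. by rewrite -[LHS](tg_mulg1 tg) -(tg_mulVg tg g) tg_mulKg. Qed.

Lemma tg_ldiv_mull g x y : (g * x)^-1 * (g * y) = x^-1 * y.
Proof. by rewrite tg_invMg -tg_mulA tg_mulKg. Qed.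

Lemma ltrans_mulVg n g h (x : Gpow G n) :
  ltrans tg (g^-1 * h) (ltrans tg g x) = ltrans tg h x.
Proof.
by apply: funext => i; rewrite /ltrans tg_invMg tg_invgK -tg_mulA tg_mulKVg.
Qed.

Lemma Gamma_ltrans U q g (y : Gpow G q.+1) :
  Gamma tg U q y -> Gamma tg U q (ltrans tg g y).
Proof. by case: q y => [//|q] y Uy i j; rewrite /ltrans tg_ldiv_mull. Qed.

Lemma Gpow_cvg n (T : Type) (F : set_system T) (FF : Filter F)
    (u : T -> Gpow G n) (y : Gpow G n) :
  (forall i, (fun t => u t i) @ F --> y i) -> u @ F --> y.
Proof.
move=> uy; apply/cvg_sup => i; apply/cvg_image.
  by rewrite eqEsubset; split=> v // _; exists (cst v).
move=> W /= /uy Wn; exists ((fun h : Gpow G n => h i) @^-1` W) => //.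
by rewrite eqEsubset; split => [j [? + <-//]|j Wj]; exists (fun _ => j).
Qed.

Lemma ltrans_continuous {T : topologicalType} {n} {a : T -> G} {b : T -> Gpow G n} :
  continuous a -> continuous b -> continuous (fun t => ltrans tg (a t) (b t)).
Proof.
move=> aC bC t; apply: Gpow_cvg => i.
apply: (@continuous2_cvg _ _ _ _ (nbhs t) _ _ _ (tg_mul tg)).
- by move=> ?; exact: (@tg_mul_cont _ tg (_, _)).
- exact: continuous_comp (aC t) (@tg_inv_cont _ tg (a t)).
- exact: continuous_comp (bC t) (@proj_continuous _ (fun=> G) i (b t)).
Qed.

Lemma head_continuous n {T : topologicalType} :
  continuous (fun x : Gpow G n.+1 * T => x.1 ord0).
Proof.
have fstC : continuous (fun x : Gpow G n.+1 * T => x.1) by move=> x; exact: cvg_fst.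
by move=> x; exact: continuous_comp (fstC x) (@proj_continuous _ (fun=> G) ord0 x.1).
Qed.

Definition Gfixed {p q} (f : Cochain p q) : Prop :=
  forall g x, act g (f (ltrans tg g x.1, ltrans tg g x.2)) = f x.

Lemma Gfixed_eps p (f : Gpow G p.+1 -> A) :
  Gfixed (eps p f) <-> forall g x, act g (f (ltrans tg g x)) = f x.
Proof. by split=> fixf g x; [exact: (fixf g (x, fun=> tg_one tg)) | exact: fixf]. Qed.

Definition ltrans_head {p q} (x : Gpow G p.+1 * Gpow G q.+1) :
    Gpow G p.+1 * Gpow G q.+1 :=
  (ltrans tg (x.1 ord0) x.1, ltrans tg (x.1 ord0) x.2).

Definition equivariantize {p q} (f : Cochain p q) : Cochain p q :=
  fun x => act (x.1 ord0) (f (ltrans_head x)).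

Lemma equivariantize_id p q (f : Cochain p q) : Gfixed f -> equivariantize f = f.
Proof. by move=> fixf; apply: funext => x; exact: fixf. Qed.

Lemma equivariantize_Gfixed p q (f : Cochain p q) :
  (forall g h a, act (g * h) a = act g (act h a)) -> Gfixed (equivariantize f).
Proof.
move=> actM g x; rewrite /equivariantize /ltrans_head /= !ltrans_mulVg.
by rewrite -actM tg_mulKVg.
Qed.

Lemma Gfixed_dv p q (f : Cochain p q) :
  (forall g, zmod_morphism (act g)) -> Gfixed f -> Gfixed (dv p q f).
Proof.
move=> actD fixf g x; rewrite dv_zmod_morphism //; congr (_ *~ _).
by apply: eq_bigr => i _; congr (_ *~ _); exact: (fixf g (x.1, _)).
Qed.

Lemma dv_equivariantize p q (f : Cochain p q) :
  (forall g, zmod_morphism (act g)) ->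
  dv p q (equivariantize f) = equivariantize (dv p q f).
Proof.
by move=> actD; apply: funext => x; rewrite /equivariantize dv_zmod_morphism.
Qed.

Lemma ltrans_head_continuous p q : continuous (@ltrans_head p q).
Proof.
have fstC : continuous (fun x : Gpow G p.+1 * Gpow G q.+1 => x.1).
  by move=> x; exact: cvg_fst.
have sndC : continuous (fun x : Gpow G p.+1 * Gpow G q.+1 => x.2).
  by move=> x; exact: cvg_snd.
move=> x; have := cvg_pair
  (ltrans_continuous (head_continuous p) fstC x)
  (ltrans_continuous (head_continuous p) sndC x); exact.
Qed.

Lemma Alc_equivariantize p q (f : Cochain p q) :
  continuous (fun ga : G * A => act ga.1 ga.2) ->
  Alc tg A p q f -> Alc tg A p q (equivariantize f).
Proof.
move=> actC [U [U1 fC]]; exists U; split => //.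
set S := [set x : Gpow G p.+1 * Gpow G q.+1 | Gamma tg U q x.2].
have headS x : S x -> S (ltrans_head x) by exact: Gamma_ltrans.
have /subspace_continuousP fheadC :=
  within_continuous_comp (ltrans_head_continuous p q) headS fC.
apply/(@subspace_continuousP _ S) => x Sx; rewrite /from_subspace.
apply: (@continuous2_cvg _ _ _ _ _ _ (fun x => x.1 ord0) (f \o ltrans_head) act).
- exact: (actC (_, _)).
- by apply: cvg_trans (head_continuous p x); apply: cvg_app; exact: cvg_within.
- exact: fheadC.
Qed.

End GModuleCochains.

Theorem mainTheorem2 (G : topologicalType) (tg : topGroup G)
    (A : topologicalZmodType) (act : G -> A -> A) :
  is_topGmodule tg act ->
  (forall p : nat, aug_exact p (Ac A p) (Alc tg A p)) ->
  forall p : nat, aug_exact p (Cc tg act p) (AlcG tg act p).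
Proof.
move=> [actD _ actM actC] Alc_exact p.
apply: (@aug_exact_retract _ _ p _ _ _ _ (fun q => @Gfixed _ tg _ act p q)
          (fun q => @equivariantize _ tg _ act p q) (Alc_exact p)).
- by move=> f; split=> -[Af fixf]; split=> //; apply/Gfixed_eps.
- by [].
- by move=> q f; exact: Gfixed_dv.
- by move=> q f Af; split; [exact: Alc_equivariantize | exact: equivariantize_Gfixed].
- by move=> q f; exact: equivariantize_id.
- by move=> q f; exact: dv_equivariantize.
Qed.
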